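(* Let $(G=(V,E),k,\ell)$ be an instance of Almost Forest Deletion. Construct $(G'=(V',E'),R,k',\ell')$ as follows: start with $V'=V$, $E'=\varnothing$, $R=\varnothing$; for each edge $e=(u,v)\in E$ add a new vertex $v_e$ to $V'$ and to $R$ and add the edges $(u,v_e)$ and $(v_e,v)$ to $E'$ (i.e. subdivide $e$); set $k'=k$, $\ell'=\ell$. Then $(G',R,k',\ell')$ is an instance of Restricted Independent Almost Forest Deletion equivalent to $(G,k,\ell)$.
   Context: A graph is an $\ell$-forest if deleting at most $\ell$ of its edges yields a forest. Almost Forest Deletion: given a graph $G$ and integers $k,\ell\ge0$, decide whether there is $S\subseteq V(G)$ with $|S|\le k$ such that $G-S$ is an $\ell$-forest. Restricted Independent Almost Forest Deletion: given a graph $G$, a set $R\subseteq V(G)$ and integers $k,\ell\ge 0$, decide whether there is a set $S\subseteq V(G)\setminus R$ with $|S|\le k$ such that $S$ is an independent set in $G$ and $G-S$ is an $\ell$-forest. *)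

(* Finite simple graphs as symmetric irreflexive relations on a finType. *)
From mathcomp Require Import all_boot.
Set Implicit Arguments. Unset Strict Implicit. Unset Printing Implicit Defensive.

Section Graphs.
Variable T : finType.

Definition has_cycle (A : {set T}) (r : rel T) : Prop :=
  exists s : seq T, [/\ uniq s, 2 < size s, all (mem A) s & cycle r s].

Definition is_forest (A : {set T}) (r : rel T) : Prop := ~ has_cycle A r.

Definition edges_on (A : {set T}) (r : rel T) : {set {set T}} :=
  [set [set x; y] | x in A, y in A & r x y].

Definition ell_forest (A : {set T}) (r : rel T) (l : nat) : Prop :=
  exists F : {set {set T}},
    [/\ F \subset edges_on A r, #|F| <= l &
        is_forest A (fun x y => r x y && ([set x; y] \notin F))].

Definition independent (r : rel T) (S : {set T}) : Prop :=
  forall x y, x \in S -> y \in S -> ~~ r x y.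

Definition AFD (e : rel T) (k l : nat) : Prop :=
  exists S : {set T}, #|S| <= k /\ ell_forest (~: S) e l.

Definition RIAFD (e : rel T) (R : {set T}) (k l : nat) : Prop :=
  exists S : {set T},
    [/\ S \subset ~: R, #|S| <= k, independent e S & ell_forest (~: S) e l].

Definition edge_set (e : rel T) : {set {set T}} :=
  [set X : {set T} | [exists x, exists y, e x y && (X == [set x; y])]].

Definition subdiv_vertex (e : rel T) : finType :=
  (T + {X : {set T} | X \in edge_set e})%type.

Definition subdiv_rel (e : rel T) : rel (subdiv_vertex e) :=
  fun a b => match a, b with
             | inl u, inr X => u \in val X
             | inr X, inl u => u \in val X
             | _, _ => false
             end.

Definition subdiv_R (e : rel T) : {set subdiv_vertex e} :=
  [set a | if a is inr _ then true else false].

End Graphs.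

Arguments subdiv_vertex {T} e.
Arguments subdiv_rel {T} e.
Arguments subdiv_R {T} e.

From mathcomp Require Import all_boot.
Set Implicit Arguments. Unset Strict Implicit. Unset Printing Implicit Defensive.

(* Deleting a set S of vertices makes sense in both graphs as soon as S consists
   of original vertices, and such a set is automatically independent in the
   subdivision G' (original vertices are pairwise non-adjacent there); a
   solution of the restricted problem may only use original vertices anyway.
   Cycles of G - S and of G' - S then correspond: subdividing a cycle of G gives
   a cycle of G', and contracting the subdivision vertices of a cycle of G'
   gives a cycle of G, of length at least 3 because G has no parallel edges, so
   G' has no 4-cycles.  Deleting an edge uv of G corresponds to deleting one of
   the two half-edges u v_e, v_e v, and deleting either half-edge breaks exactly
   the cycles through uv. *)

Lemma uniq_cycle_neq (T : eqType) (r : rel T) (s : seq T) :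
  uniq s -> 1 < size s -> cycle r s -> cycle [rel x y | (x != y) && r x y] s.
Proof.
have path_neq z q : z \notin q -> uniq q -> path r z q ->
    path [rel a b | (a != b) && r a b] z q.
  elim: q z => //= a q IH z; rewrite inE negb_or => /andP[za _] /andP[aNq uq].
  by case/andP=> rza raq; rewrite za rza IH.
case: s => [//|x p] /= /andP[xNp uniq_p] size_p.
rewrite !rcons_path => /andP[rxp rlast].
rewrite path_neq //= rlast andbT.
case: p size_p xNp {rxp rlast uniq_p} => [//|y p] _ /= xNp.
by apply: contraNneq xNp => <-; exact: mem_last.
Qed.

Lemma edges_onP (T : finType) (A : {set T}) (r : rel T) (B : {set T}) :
  reflect (exists x y, [/\ x \in A, y \in A, r x y & B = [set x; y]])
          (B \in edges_on A r).
Proof.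
apply: (iffP imset2P) => [[x y xA] | [x [y [xA yA rxy ->]]]].
  by rewrite inE => /andP[yA rxy] ->; exists x, y.
by apply: (Imset2spec xA) => //; rewrite inE yA.
Qed.

Section Subdivision.
Variables (T : finType) (e : rel T).
Hypothesis e_sym : symmetric e.
Local Notation V := (subdiv_vertex e).
Local Notation ET := {X : {set T} | X \in edge_set e}.
Local Notation r' := (subdiv_rel e).

Lemma inl_inj : injective (@inl T ET).
Proof. by move=> u w []. Qed.

Lemma edge_setP (A : {set T}) :
  reflect (exists x y, e x y /\ A = [set x; y]) (A \in edge_set e).
Proof.
rewrite inE; apply: (iffP existsP) => [[x /existsP[y /andP[exy /eqP ->]]] |].
  by exists x, y.
by case=> x [y [exy ->]]; exists x; apply/existsP; exists y; rewrite exy eqxx.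
Qed.

Lemma subdiv_edge_set2 (X : ET) u w : u != w -> u \in val X -> w \in val X ->
  val X = [set u; w] /\ e u w.
Proof.
case: X => /= _ /edge_setP[x [y [exy ->]]] uw uX wX; move: uX wX uw.
by case/set2P=> -> /set2P[]->; rewrite ?eqxx // => _; rewrite 1?setUC 1?e_sym.
Qed.

Definition orig (a : V) : option T := if a is inl u then Some u else None.

Lemma origK : ocancel orig inl.
Proof. by case. Qed.

Lemma mem_pmap_orig s x : (x \in pmap orig s) = (inl x \in s).
Proof. by rewrite -(mem_map inl_inj) pmap_filter ?mem_filter //; exact: origK. Qed.

Lemma size_pmap_orig_cycle u p : uniq (inl u :: p) -> 2 < size (inl u :: p) ->
  cycle r' (inl u :: p) -> 2 < size (pmap orig (inl u :: p)).
Proof.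
(* The cycle alternates u X w Y ...; a 4-cycle would make X and Y both the edge uw. *)
case: p => [|[?|X] [|[w|?] [|[?|Y] [|[?|?] p]]]] //=; rewrite ?andbF //.
move=> /and3P[uN XN _] _ /and5P[uX wX wY uY _].
have uw : u != w by apply: contraNneq uN => ->; rewrite !inE eqxx orbT.
have [XE _] := subdiv_edge_set2 uw uX wX.
have [YE _] := subdiv_edge_set2 uw uY wY.
have XY : X = Y by apply: val_inj; rewrite XE YE.
by rewrite XY !inE eqxx orbT in XN.
Qed.

Section Contraction.
Variable r : rel V.
Hypothesis r_sub : subrel r r'.

Definition subdiv_link : rel T :=
  fun u w => [exists X : ET, r (inl u) (inr X) && r (inr X) (inl w)].

Lemma sorted_pmap_orig a p : path r a p -> sorted subdiv_link (pmap orig (a :: p)).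
Proof.
elim: p a => [|b p IH] a /=; first by case: a.
case/andP=> rab rbp; have {IH} := IH b rbp.
case: a rab => [u|X] //= rab; case: b rab rbp => [w /r_sub //|X rab] /=.
case: p => [|[w|Y] p] //=; last by case/andP=> /r_sub.
case/andP=> rXw _ ->; rewrite andbT.
by apply/existsP; exists X; rewrite rab.
Qed.

Lemma cycle_pmap_orig u p :
  cycle r (inl u :: p) -> cycle subdiv_link (u :: pmap orig p).
Proof. by move/sorted_pmap_orig; rewrite /= -!cats1 pmap_cat. Qed.

Lemma has_cycle_contract (A : {set T}) (B : {set V}) (rr : rel T) :
  (forall u, inl u \in B -> u \in A) ->
  (forall u w X, u != w -> r (inl u) (inr X) -> r (inr X) (inl w) -> rr u w) ->
  has_cycle B r -> has_cycle A rr.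
Proof.
move=> BA link_rr [s [uniq_s size_s Bs cyc_s]].
have [u us] : exists u, inl u \in s.
  case: s size_s cyc_s {uniq_s Bs} => [|[u|X] [|[w|Y] s]] //= _;
    try by exists u; rewrite inE eqxx.
    by exists w; rewrite !inE eqxx orbT.
  by case/andP=> /r_sub.
case/rot_to: us => i p rot_s.
have : [/\ uniq (inl u :: p), 2 < size (inl u :: p),
          all (mem B) (inl u :: p) & cycle r (inl u :: p)].
  by rewrite -rot_s rot_uniq size_rot rot_cycle (eq_all_r (mem_rot i s)).
case=> {}uniq_s {}size_s {}Bs {}cyc_s.
have uniq_c := pmap_uniq origK uniq_s.
have size_c := size_pmap_orig_cycle uniq_s size_s (sub_cycle r_sub cyc_s).
exists (pmap orig (inl u :: p)); split => //.
- by apply/allP => x; rewrite mem_pmap_orig => /(allP Bs); exact: BA.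
- apply: sub_cycle (uniq_cycle_neq uniq_c (ltnW size_c) (cycle_pmap_orig cyc_s)).
  by move=> x y /andP[xy /existsP[X /andP[]]]; exact: link_rr.
Qed.

End Contraction.

(* The second branch is junk: it is never taken along a path of [e]. *)
Definition subdivide_step (u w : T) : seq V :=
  if (insub [set u; w] : option ET) is Some X then [:: inr X; inl w]
  else [:: inl w].

Fixpoint subdivide (u : T) (p : seq T) : seq V :=
  if p is w :: p' then subdivide_step u w ++ subdivide w p' else [::].

Variant subdivide_step_spec u w : seq V -> Type :=
  | SubdivideStepEdge (X : ET) of val X = [set u; w] :
      subdivide_step_spec u w [:: inr X; inl w]
  | SubdivideStepNone : subdivide_step_spec u w [:: inl w].

Lemma subdivide_stepP u w : subdivide_step_spec u w (subdivide_step u w).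
Proof.
by rewrite /subdivide_step; case: insubP => [X _ /SubdivideStepEdge|_] //; right.
Qed.

Lemma subdivide_stepE u w : e u w ->
  exists2 X : ET, val X = [set u; w] & subdivide_step u w = [:: inr X; inl w].
Proof.
move=> euw; rewrite /subdivide_step; case: insubP => [X _ valX|]; first by exists X.
by case/negP; apply/edge_setP; exists u, w.
Qed.

Lemma last_subdivide u p : last (inl u) (subdivide u p) = inl (last u p).
Proof.
by elim: p u => //= w p IH u; rewrite last_cat -IH; case: subdivide_stepP.
Qed.

Lemma subdivide_rcons u p w :
  subdivide u (rcons p w) = subdivide u p ++ subdivide_step (last u p) w.
Proof. by elim: p u => [|x p IH] u /=; rewrite ?cats0 // IH catA. Qed.

Lemma size_subdivide u p : size p <= size (subdivide u p).
Proof.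
elim: p u => //= w p IH u; rewrite size_cat -add1n leq_add ?IH //.
by case: subdivide_stepP.
Qed.

Lemma mem_subdivide_inl u p x : (inl x \in subdivide u p) = (x \in p).
Proof.
elim: p u => //= w p IH u; rewrite mem_cat IH inE.
by case: subdivide_stepP => *; rewrite !inE.
Qed.

Lemma mem_subdivide_inr u p X :
  inr X \in subdivide u p -> {subset val X <= u :: p}.
Proof.
elim: p u => //= w p IH u; rewrite mem_cat => /orP[|/IH sub x /sub]; last first.
  by rewrite !inE => ->; rewrite orbT.
case: subdivide_stepP => [Y valY|]; rewrite !inE // => /orP[/eqP[->]|] //.
by rewrite valY => x /set2P[]->; rewrite !inE eqxx ?orbT.
Qed.

Lemma subdivide_uniq u p : uniq (u :: p) -> uniq (inl u :: subdivide u p).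
Proof.
elim: p u => //= w p IH u /andP[uNwp uniq_wp].
move: (uNwp); rewrite inE negb_or => /andP[uw uNp].
have /andP[wNS uniq_S] := IH w uniq_wp.
have uNS : inl u \notin subdivide w p by rewrite mem_subdivide_inl.
case: subdivide_stepP => [X valX|] /=;
  rewrite !inE (inj_eq inl_inj) (negbTE uw) (negbTE uNS) wNS uniq_S //= andbT.
by apply: contra uNwp => /mem_subdivide_inr; apply; rewrite valX set21.
Qed.

Lemma subdivide_closing_notin u p X : uniq (u :: p) -> 1 < size p ->
  val X = [set last u p; u] -> inr X \notin subdivide u p.
Proof.
case: p => [//|w p] /andP[uNwp /andP[wNp _]] size_p valX /=.
rewrite mem_cat negb_or; apply/andP; split; last first.
  apply/negP => /mem_subdivide_inr/(_ u); rewrite valX set22 => /(_ isT).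
  exact/negP.
case: subdivide_stepP => [Y valY|]; rewrite !inE //.
apply/negP => /orP[/eqP[XY]|//].
have : last w p \in [set u; w] by rewrite -valY -XY valX set21.
case/set2P=> [lu|lw].
  by move: uNwp; rewrite -lu mem_last.
case: p wNp lw size_p {uNwp valX} => [//|y q] /= wNq lw _.
by rewrite -lw mem_last in wNq.
Qed.

Section Lifting.
Variables (A : {set T}) (B : {set V}) (rr : rel T) (r : rel V).
Hypothesis rr_sub : subrel rr e.
Hypothesis AB : forall u, u \in A -> inl u \in B.
Hypothesis inrB : forall X, inr X \in B.
Hypothesis rr_walk : forall u w (X : ET), u \in A -> w \in A -> rr u w ->
  val X = [set u; w] -> r (inl u) (inr X) && r (inr X) (inl w).

Lemma subdivide_path u p :
  path rr u p -> all (mem A) (u :: p) -> path r (inl u) (subdivide u p).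
Proof.
elim: p u => //= w p IH u /andP[ruw rwp] /and3P[uA wA Awp].
have [X valX ->] := subdivide_stepE (rr_sub ruw).
by rewrite /= andbA rr_walk ?IH //= wA.
Qed.

Lemma has_cycle_subdivide : has_cycle A rr -> has_cycle B r.
Proof.
case=> [[|u p] [uniq_c size_c Ac cyc_c]] //.
have Ac' : all (mem A) (u :: rcons p u).
  by rewrite -rcons_cons all_rcons Ac andbT; case/andP: Ac.
move: (cyc_c); rewrite /= rcons_path => /andP[_ /rr_sub/subdivide_stepE].
case=> X valX stepE.
exists (subdivide u (rcons p u)); split.
- have := subdivide_uniq uniq_c; rewrite cons_uniq => /andP[uNS uniq_S].
  rewrite subdivide_rcons stepE uniq_catC cat_cons cat1s !cons_uniq uNS uniq_S.
  by rewrite inE negb_or subdivide_closing_notin.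
- by rewrite (leq_trans _ (size_subdivide _ _)) // size_rcons.
- apply/allP => -[x|Y] xS; last exact: inrB.
  by apply/AB/(allP Ac'); rewrite mem_subdivide_inl in xS; rewrite inE xS orbT.
- by rewrite (cycle_path (inl u)) last_subdivide last_rcons subdivide_path.
Qed.

End Lifting.

Definition half_edge (A : {set T}) : {set V} :=
  if [pick x in A] is Some x then
    if (insub A : option ET) is Some X then [set inl x; inr X] else set0
  else set0.

Lemma half_edge_val (X : ET) :
  exists2 x, x \in val X & half_edge (val X) = [set inl x; inr X].
Proof.
rewrite /half_edge valK; case: pickP => [x xX | noX]; first by exists x.
have /edge_setP[x [y [_ valX]]] := valP X.
by move: (noX x); rewrite valX set21.
Qed.

Definition edge_of (B : {set V}) : {set T} :=
  if [pick X : ET | inr X \in B] is Some X then val X else set0.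

Lemma edge_of_half u X : edge_of [set inl u; inr X] = val X.
Proof.
rewrite /edge_of; case: pickP => [Y | /(_ X)]; last by rewrite set22.
by rewrite !inE => /orP[/eqP // | /eqP[->]].
Qed.

Lemma AFD_subdiv k l : AFD e k l -> RIAFD r' (subdiv_R e) k l.
Proof.
case=> S [leS [F [F_edges leF forestF]]].
exists (inl @: S); split.
- by apply/subsetP => _ /imsetP[u _ ->]; rewrite !inE.
- by rewrite card_imset //; exact: inl_inj.
- by move=> _ _ /imsetP[u _ ->] /imsetP[w _ ->].
exists (half_edge @: F); split.
- apply/subsetP => _ /imsetP[_ /(subsetP F_edges)/edges_onP[x [y [xS yS exy ->]]] ->].
  have xyE : [set x; y] \in edge_set e by apply/edge_setP; exists x, y.
  pose X : ET := exist _ [set x; y] xyE.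
  have [z zxy ->] := half_edge_val X.
  apply/edges_onP; exists (inl z), (inr X); split => //.
  + by rewrite !inE (mem_imset _ _ inl_inj) -in_setC; case/set2P: zxy => ->.
  + by rewrite !inE; apply/imsetP => -[].
- exact: leq_trans (leq_imset_card _ _) leF.
- apply: contra_not forestF.
  apply: has_cycle_contract => [a b /andP[] // | u | u w X uw].
  + by rewrite !inE mem_imset //; exact: inl_inj.
  case/andP=> uX uXF /andP[wX XwF]; have [valX euw] := subdiv_edge_set2 uw uX wX.
  rewrite euw /=; apply/negP => /(imset_f half_edge).
  have [z] := half_edge_val X; rewrite valX => /set2P[]-> ->; first exact/negP.
  by rewrite setUC; exact/negP.
Qed.

Lemma subdiv_AFD k l : RIAFD r' (subdiv_R e) k l -> AFD e k l.
Proof.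
case=> S' [S'R leS' _ [F' [_ leF' forestF']]].
pose S := inl @^-1: S'.
exists S; split.
  rewrite -(card_imset _ inl_inj); apply: leq_trans leS'.
  by apply/subset_leq_card/subsetP => _ /imsetP[u uS ->]; rewrite inE in uS.
exists (edges_on (~: S) e :&: edge_of @: F'); split.
- exact: subsetIl.
- apply: leq_trans (subset_leq_card (subsetIr _ _)) _.
  exact: leq_trans (leq_imset_card _ _) leF'.
- apply: contra_not forestF'.
  apply: has_cycle_subdivide => [a b /andP[] // | u | X | u w X uS wS].
  + by rewrite !inE.
  + by rewrite inE; apply/negP => /(subsetP S'R); rewrite !inE.
  case/andP=> euw uwF valX; rewrite /= valX !inE !eqxx orbT /=.
  have uw_edge : [set u; w] \in edges_on (~: S) e by apply/edges_onP; exists u, w.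
  apply/andP; split; apply: contra uwF => XF; rewrite inE uw_edge -valX.
    by rewrite -(edge_of_half u X) imset_f.
  by rewrite -(edge_of_half w X) setUC imset_f.
Qed.

End Subdivision.

Theorem lemma12 (T : finType) (e : rel T) (e_sym : symmetric e) (e_irr : irreflexive e)
    (k l : nat) :
  [/\ symmetric (subdiv_rel e), irreflexive (subdiv_rel e) &
      (AFD e k l <-> RIAFD (subdiv_rel e) (subdiv_R e) k l)].
Proof.
split; [by move=> [u|X] [w|Y] | by case | split].
- exact: AFD_subdiv.
- exact: subdiv_AFD.
Qed.
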